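(* Let $0<q<p\le 1$, let $n\in\mathbb{N}$, $k\in\{0,1,2,\dots\}$, and for $t\in[0,1]$ put $$b_{n,k}^{(p,q)}(qt)=\frac{1}{p^{k(n-1)+n(n-1)/2}}\begin{bmatrix}n+k+1\\k\end{bmatrix}_{p,q}(qt)^k(1-qt)_{p,q}^{n}.$$ Then for every $s=0,1,2,\dots$, $$\int_0^1 b_{n,k}^{(p,q)}(qt)\,t^s\,d_{p,q}t=\frac{[n+k+1]_{p,q}!\,[k+s]_{p,q}!}{[k]_{p,q}!\,[n+k+s+1]_{p,q}!}\cdot\frac{(pq)^k}{[n+1]_{p,q}}\,p^{n(s+1)}.$$
   Context: For $0<q<p\le1$: $[n]_{p,q}=\frac{p^n-q^n}{p-q}$; $[n]_{p,q}!=[1]_{p,q}[2]_{p,q}\cdots[n]_{p,q}$ for $n\ge1$ and $[0]_{p,q}!=1$; $\begin{bmatrix}n\\k\end{bmatrix}_{p,q}=\frac{[n]_{p,q}!}{[k]_{p,q}![n-k]_{p,q}!}$; $(x+y)_{p,q}^n=\prod_{j=0}^{n-1}(p^jx+q^jy)$, so $(1-qt)^n_{p,q}=\prod_{j=0}^{n-1}(p^j-q^{j+1}t)$. The $(p,q)$-integral is $\int_0^a f(t)\,d_{p,q}t=(p-q)a\sum_{j=0}^\infty \frac{q^j}{p^{j+1}}f\!\left(\frac{q^j}{p^{j+1}}a\right)$. *)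

From Stdlib Require Import Reals.
From Coquelicot Require Import Coquelicot.
Open Scope R_scope.

Definition pq_num (p q : R) (n : nat) : R := (p ^ n - q ^ n) / (p - q).

Fixpoint pq_fact (p q : R) (n : nat) : R :=
  match n with
  | O => 1
  | S m => pq_fact p q m * pq_num p q (S m)
  end.

Definition pq_binom (p q : R) (n k : nat) : R :=
  pq_fact p q n / (pq_fact p q k * pq_fact p q (n - k)).

Fixpoint pq_binpow (p q x y : R) (n : nat) : R :=
  match n with
  | O => 1
  | S m => pq_binpow p q x y m * (p ^ m * x + q ^ m * y)
  end.

Definition is_pq_integral (p q : R) (f : R -> R) (a v : R) : Prop :=
  is_series (fun j : nat => (p - q) * a * (q ^ j / p ^ (S j))
                              * f (q ^ j / p ^ (S j) * a)) v.

(* b_{n,k}^{(p,q)}(q t), with (1 - q t)^n_{p,q} = (1 + (-(q t)))^n_{p,q}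
   = prod_{j<n} (p^j - q^(j+1) t).  Exponent k(n-1) + n(n-1)/2 (n >= 1). *)
Definition bpq (p q : R) (n k : nat) (t : R) : R :=
  / p ^ (k * (n - 1) + n * (n - 1) / 2)
  * pq_binom p q (n + k + 1) k * (q * t) ^ k * pq_binpow p q 1 (- (q * t)) n.

(* Write I(n, m) for the (p,q)-integral over [0, 1] of t^m (1 - q t)^n_{p,q}.
   For n = 0 the defining series is geometric with ratio (q/p)^(m+1) and
   I(0, m) = 1/[m+1]_{p,q}.  Since (1 - q t)^(n+1)_{p,q} is
   (1 - q t)^n_{p,q} (p^n - q^(n+1) t), linearity gives
   I(n+1, m) = p^n I(n, m) - q^(n+1) I(n, m+1), and the closed form
   [m]! [n]! / [n+m+1]! p^(n(m+1) + n(n-1)/2) satisfies this recurrence by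
   [a+b] = p^b [a] + q^a [b].  The theorem is I(n, k+s) times the constant
   in front of b_{n,k}. *)

From Stdlib Require Import Reals Lra Lia.
From Coquelicot Require Import Coquelicot.
Open Scope R_scope.

Lemma is_pq_integral_ext (p q : R) (f g : R -> R) (a v : R) :
  (forall t, f t = g t) -> is_pq_integral p q f a v -> is_pq_integral p q g a v.
Proof.
  intros Efg H; eapply is_series_ext; [|exact H].
  intros j; simpl; now rewrite Efg.
Qed.

Lemma is_pq_integral_scal (p q : R) (c : R) (f : R -> R) (a v : R) :
  is_pq_integral p q f a v ->
  is_pq_integral p q (fun t => c * f t) a (c * v).
Proof.
  intros H; apply (is_series_scal c) in H.
  eapply is_series_ext; [|exact H].
  intros j; unfold scal; simpl; unfold mult; simpl; ring.
Qed.

Lemma is_pq_integral_plus (p q : R) (f g : R -> R) (a v w : R) :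
  is_pq_integral p q f a v -> is_pq_integral p q g a w ->
  is_pq_integral p q (fun t => f t + g t) a (v + w).
Proof.
  intros Hf Hg; pose proof (is_series_plus _ _ _ _ Hf Hg) as H.
  eapply is_series_ext; [|exact H].
  intros j; unfold plus; simpl; ring.
Qed.

Lemma pow_lt_pow_base (x y : R) (n : nat) :
  0 <= x < y -> (0 < n)%nat -> x ^ n < y ^ n.
Proof.
  intros Hxy Hn; induction n as [|n IH]; [lia|].
  destruct n as [|n]; [simpl; lra|].
  assert (0 <= x ^ S n) by (apply pow_le; lra).
  simpl in *; specialize (IH ltac:(lia)); nra.
Qed.

Lemma pq_num_add (p q : R) (a b : nat) : p <> q ->
  pq_num p q (a + b) = p ^ b * pq_num p q a + q ^ a * pq_num p q b.
Proof.
  intros Hpq; unfold pq_num; rewrite !pow_add; field; lra.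
Qed.

Lemma triangular_succ (n : nat) :
  ((S n * (S n - 1)) / 2 = n * (n - 1) / 2 + n)%nat.
Proof.
  replace (S n * (S n - 1))%nat with (n * (n - 1) + n * 2)%nat
    by (destruct n; simpl; lia).
  now rewrite Nat.div_add by lia.
Qed.

Definition pq_moment (p q : R) (n m : nat) : R :=
  pq_fact p q m * pq_fact p q n / pq_fact p q (n + m + 1)
  * p ^ (n * (m + 1) + n * (n - 1) / 2).

Section Moments.

Variables p q : R.
Hypothesis q_gt0 : 0 < q.
Hypothesis q_lt_p : q < p.

Lemma pq_num_pos (n : nat) : (0 < n)%nat -> 0 < pq_num p q n.
Proof.
  intros Hn; unfold pq_num.
  pose proof (pow_lt_pow_base q p n ltac:(lra) Hn).
  apply Rdiv_lt_0_compat; lra.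
Qed.

Lemma pq_fact_pos (n : nat) : 0 < pq_fact p q n.
Proof.
  induction n as [|n IH]; simpl; [lra|].
  pose proof (pq_num_pos (S n) ltac:(lia)); nra.
Qed.

Lemma is_pq_integral_pow (m : nat) :
  is_pq_integral p q (fun t => t ^ m) 1 (/ pq_num p q (S m)).
Proof.
  assert (Hpm : 0 < p ^ S m) by (apply pow_lt; lra).
  pose proof (pow_lt_pow_base q p (S m) ltac:(lra) ltac:(lia)) as Hqm.
  assert (Hqm0 : 0 < q ^ S m) by (apply pow_lt; lra).
  set (r := q ^ S m / p ^ S m).
  assert (Hr : Rabs r < 1).
  { unfold r; rewrite Rabs_pos_eq by (apply Rlt_le, Rdiv_lt_0_compat; lra).
    apply (Rmult_lt_reg_r (p ^ S m)); [lra|]; field_simplify; lra. }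
  pose proof (is_series_scal ((p - q) / p ^ S m) _ _ (is_series_geom r Hr)) as H.
  replace (/ pq_num p q (S m)) with (scal ((p - q) / p ^ S m) (/ (1 - r))).
  - eapply is_series_ext; [|exact H]; intros j.
    unfold scal; simpl; unfold mult; simpl; unfold r, Rdiv.
    rewrite Rmult_1_r, !Rpow_mult_distr, !pow_inv, <- !pow_mult.
    replace (S m * j)%nat with (j + j * m)%nat by lia.
    replace (S j * m)%nat with (m + j * m)%nat by lia.
    rewrite !pow_add, !Rpow_mult_distr, pow1, <- pow_mult.
    assert (p ^ j <> 0) by (apply pow_nonzero; lra).
    assert (p ^ m <> 0) by (apply pow_nonzero; lra).
    assert (p ^ (j * m) <> 0) by (apply pow_nonzero; lra).
    field; repeat split; auto; lra.
  - unfold scal; simpl; unfold mult; simpl; unfold r, pq_num.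
    assert (p ^ m <> 0) by (apply pow_nonzero; lra).
    simpl pow in *; field; repeat split; auto; lra.
Qed.

Lemma pq_moment_succ (n m : nat) :
  pq_moment p q (S n) m = p ^ n * pq_moment p q n m - q ^ S n * pq_moment p q n (S m).
Proof.
  unfold pq_moment.
  replace (S n + m + 1)%nat with (S (n + m + 1)) by lia.
  replace (n + S m + 1)%nat with (S (n + m + 1)) by lia.
  rewrite triangular_succ.
  set (e := (n * (m + 1) + n * (n - 1) / 2)%nat).
  replace (S n * (m + 1) + (n * (n - 1) / 2 + n))%nat with (e + (n + S m))%nat
    by (unfold e; lia).
  replace (n * (S m + 1) + n * (n - 1) / 2)%nat with (e + n)%nat by (unfold e; lia).
  simpl pq_fact.
  replace (S (n + m + 1)) with (S n + S m)%nat by lia.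
  rewrite pq_num_add by lra.
  rewrite !pow_add.
  pose proof (pq_fact_pos m); pose proof (pq_fact_pos n).
  pose proof (pq_fact_pos (n + m + 1)).
  pose proof (pq_num_pos (S n) ltac:(lia)); pose proof (pq_num_pos (S m) ltac:(lia)).
  assert (0 < p ^ e) by (apply pow_lt; lra).
  assert (0 < p ^ n) by (apply pow_lt; lra).
  assert (0 < p ^ S m) by (apply pow_lt; lra).
  assert (0 < q ^ S n) by (apply pow_lt; lra).
  field; repeat split; nra.
Qed.

Lemma is_pq_integral_moment (n m : nat) :
  is_pq_integral p q (fun t => t ^ m * pq_binpow p q 1 (- (q * t)) n) 1
    (pq_moment p q n m).
Proof.
  revert m; induction n as [|n IH]; intros m.
  - replace (pq_moment p q 0 m) with (/ pq_num p q (S m)).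
    + eapply is_pq_integral_ext; [|apply is_pq_integral_pow].
      intros t; simpl; ring.
    + unfold pq_moment; rewrite Nat.add_1_r; simpl.
      pose proof (pq_fact_pos m); pose proof (pq_num_pos (S m) ltac:(lia)).
      field; lra.
  - rewrite pq_moment_succ; unfold Rminus; rewrite Ropp_mult_distr_l.
    eapply is_pq_integral_ext;
      [|apply is_pq_integral_plus; apply is_pq_integral_scal; apply IH].
    intros t; simpl; ring.
Qed.

End Moments.

Theorem lemma2 (p q : R) (n k s : nat) :
  0 < q -> q < p -> p <= 1 -> (1 <= n)%nat ->
  is_pq_integral p q (fun t => bpq p q n k t * t ^ s) 1
    (pq_fact p q (n + k + 1) * pq_fact p q (k + s)
       / (pq_fact p q k * pq_fact p q (n + k + s + 1))
     * ((p * q) ^ k / pq_num p q (n + 1)) * p ^ (n * (s + 1))).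
Proof.
  intros Hq Hqp _ Hn.
  set (c := / p ^ (k * (n - 1) + n * (n - 1) / 2) * pq_binom p q (n + k + 1) k * q ^ k).
  assert (Hb : forall t, c * (t ^ (k + s) * pq_binpow p q 1 (- (q * t)) n)
                         = bpq p q n k t * t ^ s).
  { intros t; unfold c, bpq; rewrite Rpow_mult_distr, (pow_add t); ring. }
  eapply is_pq_integral_ext; [exact Hb|].
  replace (_ * _ * p ^ (n * (s + 1))) with (c * pq_moment p q n (k + s));
    [now apply is_pq_integral_scal, is_pq_integral_moment|].
  unfold c, pq_moment, pq_binom.
  replace (n + k + 1 - k)%nat with (S n) by lia.
  replace (n + (k + s) + 1)%nat with (n + k + s + 1)%nat by lia.
  (* Uses [1 <= n]: [n - 1] is truncated subtraction. *)
  replace (n * (k + s + 1) + n * (n - 1) / 2)%nat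
    with (k * (n - 1) + n * (n - 1) / 2 + (k + n * (s + 1)))%nat by nia.
  replace (n + 1)%nat with (S n) by lia.
  simpl (pq_fact p q (S n)); rewrite !pow_add, Rpow_mult_distr.
  pose proof (pq_fact_pos p q Hq Hqp k); pose proof (pq_fact_pos p q Hq Hqp n).
  pose proof (pq_fact_pos p q Hq Hqp (n + k + s + 1)).
  pose proof (pq_num_pos p q Hq Hqp (S n) ltac:(lia)).
  field; repeat split; try lra; apply pow_nonzero; lra.
Qed.
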